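(* Let $L$ be a Lie algebra over a field $K$ of characteristic different from $2$ and $3$, and let $I$ be an ideal of $L$ of codimension $1$ which is perfect, i.e. $[I,I]=I$. Then there is an injective linear map $Z^2_{comm}(L)\to Z^2_{comm}(I)\oplus K$, where the summand $K$ corresponds to the trivial cocycle $\varphi$ defined by $\varphi(x,x)=1$, $\varphi(I,I)=\varphi(I,x)=0$ for a fixed $x\in L\setminus I$.
   Context: $Z^2_{comm}(L)$ is the space of symmetric bilinear forms $\varphi:L\times L\to K$ with $\varphi([x,y],z)+\varphi([z,x],y)+\varphi([y,z],x)=0$ for all $x,y,z\in L$. *)

From mathcomp Require Import all_boot all_order all_algebra.
Set Implicit Arguments. Unset Strict Implicit. Unset Printing Implicit Defensive.
Import GRing.Theory.
Local Open Scope ring_scope.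

Section LieDefs.
Variables (K : fieldType) (L : lmodType K).

Definition is_lie_bracket (br : L -> L -> L) : Prop :=
  [/\ (forall (a : K) (u v w : L), br (a *: u + v) w = a *: br u w + br v w),
      (forall (a : K) (u v w : L), br w (a *: u + v) = a *: br w u + br w v),
      (forall u : L, br u u = 0) &
      (forall u v w : L, br u (br v w) + br v (br w u) + br w (br u v) = 0)].

Definition is_subspace (I : pred L) : Prop :=
  0 \in I /\ (forall (a : K) (u v : L), u \in I -> v \in I -> a *: u + v \in I).

Definition is_ideal (br : L -> L -> L) (I : pred L) : Prop :=
  is_subspace I /\ (forall y i : L, i \in I -> br y i \in I).

Definition codim1 (I : pred L) : Prop :=
  exists x0 : L, x0 \notin I /\ forall y : L, exists c : K, y - c *: x0 \in I.

Definition perfect (br : L -> L -> L) (I : pred L) : Prop :=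
  forall i : L, i \in I -> exists s : seq (L * L),
    all (fun p => (p.1 \in I) && (p.2 \in I)) s /\
    i = \sum_(p <- s) br p.1 p.2.

Definition Z2comm_on (br : L -> L -> L) (I : pred L) (phi : L -> L -> K) : Prop :=
  [/\ (forall u v, u \in I -> v \in I -> phi u v = phi v u),
      (forall (a : K) u v w, u \in I -> v \in I -> w \in I ->
          phi (a *: u + v) w = a * phi u w + phi v w) &
      (forall u v w, u \in I -> v \in I -> w \in I ->
          phi (br u v) w + phi (br w u) v + phi (br v w) u = 0)].

Definition Z2comm (br : L -> L -> L) (phi : L -> L -> K) : Prop :=
  Z2comm_on br predT phi.

(* Concrete model of Z^2_comm(I): forms on L that vanish outside I x I and
   whose restriction to I x I lies in Z^2_comm(I).  (Restriction to I x I is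
   a linear bijection from this space onto Z^2_comm(I).) *)
Definition Z2comm_ideal (br : L -> L -> L) (I : pred L) (psi : L -> L -> K) : Prop :=
  Z2comm_on br I psi /\
  (forall u v, ~~ ((u \in I) && (v \in I)) -> psi u v = 0).

End LieDefs.

(** The map is φ ↦ (φ restricted to I × I, φ(x, x)); it is visibly linear and
    lands in Z²_comm(I) ⊕ K.  For injectivity, let φ be a cocycle vanishing on
    I × I with φ(x, x) = 0.  Every i ∈ I is a sum of brackets [a, b] with
    a, b ∈ I, and the cocycle identity gives
    φ([a, b], x) = - φ([x, a], b) - φ([b, x], a) = 0 since [x, a], [b, x] ∈ I.
    So φ vanishes on I × x as well, hence on L = I ⊕ K x. *)

From mathcomp Require Import all_boot all_order all_algebra.
From mathcomp Require Import ring.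
From Stdlib Require Import FunctionalExtensionality.
Set Implicit Arguments. Unset Strict Implicit. Unset Printing Implicit Defensive.
Import GRing.Theory.
Local Open Scope ring_scope.

Section LieAlgebra.
Variables (K : fieldType) (L : lmodType K) (br : L -> L -> L).

Lemma lie_bracket_anti : is_lie_bracket br -> forall u v, br u v = - br v u.
Proof.
case=> brZl brZr brxx _ u v.
have brDl u1 v1 w : br (u1 + v1) w = br u1 w + br v1 w.
  by rewrite -[u1 in LHS]scale1r brZl scale1r.
have brDr u1 v1 w : br w (u1 + v1) = br w u1 + br w v1.
  by rewrite -[u1 in LHS]scale1r brZr scale1r.
have := brxx (u + v); rewrite brDl !brDr !brxx add0r addr0.
by move/eqP; rewrite addr_eq0 => /eqP.
Qed.

Lemma subspace_oppr_closed (I : pred L) u :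
  is_subspace I -> u \in I -> - u \in I.
Proof.
by case=> I0 IZD uI; have := IZD (-1) u 0 uI I0; rewrite addr0 scaleN1r.
Qed.

Lemma codim1_decomp (I : pred L) (x : L) :
  is_subspace I -> codim1 I -> x \notin I ->
  forall u, exists c i, i \in I /\ u = i + c *: x.
Proof.
move=> [_ IZD] [x0 [_ modx0]] xI u.
have [e xe] := modx0 x; have [c uc] := modx0 u.
have e_neq0 : e != 0.
  by apply: contraNneq xI => e0; move: xe; rewrite e0 scale0r subr0.
exists (c / e), (u - (c / e) *: x); split; last by rewrite subrK.
have <- : - (c / e) *: (x - e *: x0) + (u - c *: x0) = u - (c / e) *: x.
  rewrite scalerBr scalerA mulNr mulfVK // !scaleNr opprK.
  by rewrite [u - _]addrC addrA addrK addrC.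
exact: IZD.
Qed.

Definition restrict_form (I : pred L) (phi : L -> L -> K) (u v : L) : K :=
  if (u \in I) && (v \in I) then phi u v else 0.

Section Cocycle.
Variable phi : L -> L -> K.
Hypothesis phiZ2 : Z2comm br phi.

Lemma Z2comm_sym u v : phi u v = phi v u.
Proof. by case: phiZ2 => sym _ _; apply: sym. Qed.

Lemma Z2comm_linear a u v w : phi (a *: u + v) w = a * phi u w + phi v w.
Proof. by case: phiZ2 => _ lin _; apply: lin. Qed.

Lemma Z2comm_cocycle u v w :
  phi (br u v) w + phi (br w u) v + phi (br v w) u = 0.
Proof. by case: phiZ2 => _ _ coc; apply: coc. Qed.

Lemma Z2comm0l w : phi 0 w = 0.
Proof.
have := Z2comm_linear 1 0 0 w; rewrite scale1r addr0 mul1r => phi00.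
by apply: (@addrI _ (phi 0 w)); rewrite addr0 -phi00.
Qed.

Lemma Z2commDl u v w : phi (u + v) w = phi u w + phi v w.
Proof. by rewrite -{1}(scale1r u) Z2comm_linear mul1r. Qed.

Lemma Z2commZl c u w : phi (c *: u) w = c * phi u w.
Proof. by rewrite -(addr0 (c *: u)) Z2comm_linear Z2comm0l addr0. Qed.

Lemma Z2commDr u v w : phi w (u + v) = phi w u + phi w v.
Proof. by rewrite !(Z2comm_sym w) Z2commDl. Qed.

Lemma Z2commZr c u w : phi w (c *: u) = c * phi w u.
Proof. by rewrite !(Z2comm_sym w) Z2commZl. Qed.

Lemma Z2comm_restrict (I : pred L) :
  is_ideal br I -> Z2comm_ideal br I (restrict_form I phi).
Proof.
move=> [[_ IZD] brI]; rewrite /restrict_form.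
split; last by move=> u v /negbTE ->.
split=> [u v uI vI|a u v w uI vI wI|u v w uI vI wI].
- by rewrite uI vI Z2comm_sym.
- by rewrite IZD // uI vI wI Z2comm_linear.
- by rewrite !brI // uI vI wI Z2comm_cocycle.
Qed.

Variables (I : pred L) (x : L).
Hypotheses (brL : is_lie_bracket br) (idealI : is_ideal br I)
  (codim1I : codim1 I) (perfectI : perfect br I) (xI : x \notin I).
Hypothesis phiI : forall i j, i \in I -> j \in I -> phi i j = 0.

Lemma Z2comm_vanish_Ix i : i \in I -> phi i x = 0.
Proof.
case: idealI => subI brI; move=> /perfectI [s [sI ->]].
elim: s sI => [|[a b] s IHs] /=; first by rewrite big_nil Z2comm0l.
move=> /andP [/andP [/= aI bI] sI]; rewrite big_cons Z2commDl IHs // addr0 /=.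
have xaI : br x a \in I by apply: brI.
have bxI : br b x \in I.
  by rewrite lie_bracket_anti //; apply: subspace_oppr_closed; last apply: brI.
by have := Z2comm_cocycle a b x; rewrite (phiI xaI bI) (phiI bxI aI) !addr0.
Qed.

Lemma Z2comm_eq0 : phi x x = 0 -> forall u v, phi u v = 0.
Proof.
move=> phixx u v.
have [c [i [iI ->]]] := codim1_decomp (proj1 idealI) codim1I xI u.
have [d [j [jI ->]]] := codim1_decomp (proj1 idealI) codim1I xI v.
rewrite Z2commDl Z2commZl !Z2commDr !Z2commZr phiI // Z2comm_vanish_Ix //.
by rewrite phixx (Z2comm_sym x) Z2comm_vanish_Ix // !mulr0 !add0r mulr0.
Qed.

End Cocycle.

Lemma Z2commB phi1 phi2 : Z2comm br phi1 -> Z2comm br phi2 ->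
  Z2comm br (fun u v => phi1 u v - phi2 u v).
Proof.
move=> phi1Z2 phi2Z2; split=> [u v _ _|a u v w _ _ _|u v w _ _ _].
- by rewrite (Z2comm_sym phi1Z2) (Z2comm_sym phi2Z2).
- by rewrite (Z2comm_linear phi1Z2) (Z2comm_linear phi2Z2); ring.
- have := Z2comm_cocycle phi1Z2 u v w; have := Z2comm_cocycle phi2Z2 u v w.
  by move=> coc2 coc1; rewrite -[0]subr0 -{1}coc1 -coc2; ring.
Qed.

End LieAlgebra.

Theorem lemma5p2 (K : fieldType) (L : lmodType K) (br : L -> L -> L)
    (I : pred L) (x : L) :
  (2%:R : K) != 0 -> (3%:R : K) != 0 ->
  is_lie_bracket br ->
  is_ideal br I -> codim1 I -> perfect br I ->
  x \notin I ->
  exists F : (L -> L -> K) -> (L -> L -> K) * K,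
    [/\ (* F maps Z^2_comm(L) into Z^2_comm(I) (+) K *)
        (forall phi, Z2comm br phi -> Z2comm_ideal br I (F phi).1),
        (* F is linear on Z^2_comm(L) *)
        (forall (a : K) phi1 phi2, Z2comm br phi1 -> Z2comm br phi2 ->
           F (fun u v => a * phi1 u v + phi2 u v) =
           ((fun u v => a * (F phi1).1 u v + (F phi2).1 u v),
            a * (F phi1).2 + (F phi2).2)),
        (* F is injective on Z^2_comm(L) *)
        (forall phi1 phi2, Z2comm br phi1 -> Z2comm br phi2 ->
           F phi1 = F phi2 -> phi1 = phi2) &
        (* the summand K corresponds to the trivial cocycle phi_x with
           phi_x(x,x) = 1, phi_x(I,I) = phi_x(I,x) = 0 *)
        (forall phi, Z2comm br phi -> phi x x = 1 ->
           (forall i y, i \in I -> phi i y = 0) ->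
           F phi = ((fun _ _ => 0), 1))].
Proof.
move=> _ _ brL idealI codim1I perfectI xI.
exists (fun phi => (restrict_form I phi, phi x x)); split.
- by move=> phi phiZ2; apply: Z2comm_restrict.
- move=> a phi1 phi2 _ _; congr pair.
  do 2!apply: functional_extensionality => ?; rewrite /restrict_form.
  by rewrite /=; case: ifP; rewrite ?mulr0 ?addr0.
- move=> phi1 phi2 phi1Z2 phi2Z2 [eqI eqxx].
  have diff0 := Z2comm_eq0 (Z2commB phi1Z2 phi2Z2) brL idealI codim1I perfectI xI.
  do 2!apply: functional_extensionality => ?; apply/eqP; rewrite -subr_eq0.
  apply/eqP/diff0 => [i j iI jI|]; last by rewrite eqxx subrr.
  have := congr1 (fun f => f i j) eqI; rewrite /restrict_form iI jI /= => ->.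
  exact: subrr.
- move=> phi _ phixx phiI; rewrite phixx; congr pair.
  do 2!apply: functional_extensionality => ?; rewrite /restrict_form.
  by case: ifP => // /andP [uI _]; apply: phiI.
Qed.
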